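(* Let $p\in(1,2]$ and $\delta\ge1$. Then for all $a,b,c,d\in\mathbb R$ and all $e,f\ge0$, $$\big(V_{p-1}(a-b)-V_{p-1}(c-d)\big)\big(V_\delta(a-c)e^p-V_\delta(b-d)f^p\big)$$ $$\ge\tfrac{p-1}{2^{\delta+1}}\big(|a-b|+|c-d|\big)^{p-2}\big(|a-c|+|b-d|\big)^{\delta-1}\big|(a-c)-(b-d)\big|^2(e^p+f^p)-\Big(\tfrac{2^{\delta+1}}{p-1}\Big)^{p-1}\big(|a-c|+|b-d|\big)^{p+\delta-1}|e-f|^p.$$
   Context: For $\gamma>0$ and $a\in\mathbb R$, $V_\gamma(a):=|a|^{\gamma-1}a$, with $V_\gamma(0):=0$. Expressions of the form $0^{p-2}\cdot 0$ (when $|a-b|+|c-d|=0$) are interpreted as $0$. *)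

From HB Require Import structures.
From mathcomp Require Import all_boot all_order all_algebra.
From mathcomp Require Import all_classical all_reals all_analysis.
Set Implicit Arguments. Unset Strict Implicit. Unset Printing Implicit Defensive.
Import Order.TTheory GRing.Theory Num.Theory.
Local Open Scope ring_scope.

Definition Vpow (R : realType) (g a : R) : R :=
  if a == 0 then 0 else `|a| `^ (g - 1) * a.

From HB Require Import structures.
From mathcomp Require Import all_boot all_order all_algebra.
From mathcomp Require Import all_classical all_reals all_analysis.
From mathcomp Require Import ring lra.
Import Order.TTheory GRing.Theory Num.Theory.
Local Open Scope ring_scope.
Set Implicit Arguments. Unset Strict Implicit.

(* Put x = a - b, y = c - d, u = a - c, v = b - d, so that x - y = u - v, and
   P = V_{p-1} x - V_{p-1} y.  Write
     V_δ u e^p - V_δ v f^p = (V_δ u - V_δ v)(e^p + f^p)/2 + (V_δ u + V_δ v)(e^p - f^p)/2.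
   By strong monotonicity of V_{p-1} (exponent <= 1) and of V_δ (exponent >= 1),
   P (V_δ u - V_δ v) is nonnegative and bounded below by a multiple of
   (|x| + |y|)^{p-2} (|u| + |v|)^{δ-1} (u - v)^2; half of it gives the main term.
   The other half absorbs the mixed term: with |P| <= 2 |u - v|^{p-1},
   |V_δ u + V_δ v| <= (|u| + |v|)^δ and |e^p - f^p| <= p max(e,f)^{p-1} |e - f|,
   what remains has the form X^{p-1} (p Y - X) with X ~ |u - v| max(e,f) and
   Y = (|u| + |v|) |e - f|, which is at most Y^p by concavity of s |-> s^{p-1}. *)

Section powR_inequalities.
Variable R : realType.
Implicit Types q r x y : R.

Lemma powR_le_bernoulli q x : 0 < q -> q <= 1 -> 0 <= x ->
  x `^ q <= 1 + q * (x - 1).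
Proof.
move=> q0 q1 x0; have [->|q1'] := eqVneq q 1; first by rewrite powRr1 //; lra.
have qlt : q < 1 by rewrite lt_neqAle q1' q1.
have := @conjugate_powR R (x `^ q) 1 q^-1 (1 - q)^-1 (powR_ge0 _ _) ler01
  ltac:(by rewrite invr_gt0) ltac:(by rewrite invr_gt0 subr_gt0)
  ltac:(rewrite !invrK; lra).
rewrite mulr1 -powRrM mulfV ?gt_eqF // powRr1 // powR1 !invrK.
lra.
Qed.

Lemma bernoulli_le_powR r x : 1 <= r -> 0 <= x -> 1 + r * (x - 1) <= x `^ r.
Proof.
move=> r1 x0; have [->|r1'] := eqVneq r 1; first by rewrite powRr1 //; lra.
have rgt : 1 < r by rewrite lt_neqAle eq_sym r1' r1.
have := @conjugate_powR R x 1 r (r / (r - 1)) x0 ler01 ltac:(lra)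
  ltac:(apply: divr_gt0; lra) ltac:(rewrite invf_div; field; lra).
rewrite mulr1 powR1 => young.
have : r * x <= r * (x `^ r / r + 1 / (r / (r - 1))) by rewrite ler_pM2l //; lra.
have -> : r * (x `^ r / r + 1 / (r / (r - 1))) = x `^ r + (r - 1) by field; lra.
lra.
Qed.

Lemma ler_powR2r r x y : 0 <= r -> 0 <= x -> x <= y -> x `^ r <= y `^ r.
Proof.
by move=> r0 x0 xy; apply: ge0_ler_powR; rewrite ?nnegrE //; apply: le_trans xy.
Qed.

Lemma ger_powR2r r x y : r <= 0 -> 0 < x -> x <= y -> y `^ r <= x `^ r.
Proof.
move=> r0 x0 xy; have y0 : 0 < y := lt_le_trans x0 xy.
rewrite -[r]opprK (powRN y) (powRN x) lef_pV2 ?posrE ?powR_gt0 //.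
by apply: ler_powR2r; rewrite ?oppr_ge0 // ltW.
Qed.

Lemma powR_subadd q x y : 0 < q -> q <= 1 -> 0 <= x -> 0 <= y ->
  (x + y) `^ q <= x `^ q + y `^ q.
Proof.
move=> q0 q1 x0 y0; have [xy0|xy0] := eqVneq (x + y) 0.
  have [-> ->] : x = 0 /\ y = 0 by split; lra.
  by rewrite addr0 powR0 ?gt_eqF // addr0.
have S0 : 0 < x + y by lra.
suff share z : 0 <= z -> z <= x + y -> (x + y) `^ q * (z / (x + y)) <= z `^ q.
  have := share x x0 ltac:(lra); have := share y y0 ltac:(lra).
  have : (x + y) `^ q = (x + y) `^ q * (x / (x + y)) + (x + y) `^ q * (y / (x + y)).
    by field; lra.
  lra.
move=> z0 zS; have ez : z = (x + y) * (z / (x + y)) by field; lra.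
rewrite [in z `^ q]ez powRM ?divr_ge0 ?(ltW S0) // ler_pM2l ?powR_gt0 //.
have [->|zpos] := eqVneq z 0; first by rewrite mul0r powR0 ?gt_eqF.
apply: ger1_powR => //; rewrite divr_gt0 ?ler_pdivrMr //=; lra.
Qed.

Lemma subr_powR_ge q x y : 0 < q -> q <= 1 -> 0 <= y -> y <= x ->
  q * x `^ (q - 1) * (x - y) <= x `^ q - y `^ q.
Proof.
move=> q0 q1 y0 yx; have [x0|x0] := eqVneq x 0.
  by rewrite x0 (_ : y = 0) ?subrr ?mulr0 //; lra.
have xpos : 0 < x by lra.
have ey : y = x * (y / x) by field.
have := powR_le_bernoulli q0 q1 (divr_ge0 y0 (ltW xpos)).
rewrite -(ler_pM2l (powR_gt0 q xpos)) -powRM ?divr_ge0 ?(ltW xpos) // -ey.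
have : x `^ q * (1 + q * (y / x - 1)) = x `^ q + q * x `^ (q - 1) * (y - x).
  by rewrite -(mulr_powRB1 (ltW xpos) q0); field.
lra.
Qed.

Lemma subr_powR_le r x y : 1 <= r -> 0 <= y -> y <= x ->
  x `^ r - y `^ r <= r * x `^ (r - 1) * (x - y).
Proof.
move=> r1 y0 yx; have r0 : 0 < r by lra.
have [x0|x0] := eqVneq x 0.
  by rewrite x0 (_ : y = 0) ?subrr ?mulr0 //; lra.
have xpos : 0 < x by lra.
have ey : y = x * (y / x) by field.
have := bernoulli_le_powR r1 (divr_ge0 y0 (ltW xpos)).
rewrite -(ler_pM2l (powR_gt0 r xpos)) -powRM ?divr_ge0 ?(ltW xpos) // -ey.
have : x `^ r * (1 + r * (y / x - 1)) = x `^ r + r * x `^ (r - 1) * (y - x).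
  by rewrite -(mulr_powRB1 (ltW xpos) r0); field.
lra.
Qed.

Lemma normB_powR_le r x y : 1 <= r -> 0 <= x -> 0 <= y ->
  `|x `^ r - y `^ r| <= r * Num.max x y `^ (r - 1) * `|x - y|.
Proof.
move=> r1 x0 y0; have r0 : 0 <= r by lra.
have [yx|/ltW xy] := leP y x.
  by rewrite !ger0_norm ?subr_ge0 ?ler_powR2r //; apply: subr_powR_le.
rewrite distrC [`|x - y|]distrC.
by rewrite !ger0_norm ?subr_ge0 ?ler_powR2r //; apply: subr_powR_le.
Qed.

Lemma powR_max_le r x y : Num.max x y `^ r <= x `^ r + y `^ r.
Proof.
have := powR_ge0 x r; have := powR_ge0 y r.
by have [yx|xy] := leP y x; lra.
Qed.

Lemma powR_midpoint_le r x y : 1 <= r -> 0 <= x -> 0 <= y ->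
  2 * ((x + y) / 2) `^ r <= x `^ r + y `^ r.
Proof.
move=> r1 x0 y0; have [xy0|xy0] := eqVneq (x + y) 0.
  have [-> ->] : x = 0 /\ y = 0 by split; lra.
  by rewrite addr0 mul0r powR0 ?mulr0 ?addr0 //; lra.
set h := (x + y) / 2; have hpos : 0 < h by rewrite /h; lra.
have hsplit (z : R) : 0 <= z -> z `^ r = h `^ r * (z / h) `^ r.
  by move=> z0; rewrite -powRM ?(ltW hpos) ?(divr_ge0 z0 (ltW hpos)) // mulrC divfK ?gt_eqF.
rewrite (hsplit x x0) (hsplit y y0) -mulrDr [2 * _]mulrC.
apply: ler_wpM2l; first exact: powR_ge0.
have := bernoulli_le_powR r1 (divr_ge0 x0 (ltW hpos)).
have := bernoulli_le_powR r1 (divr_ge0 y0 (ltW hpos)).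
have : r * (x / h - 1) + r * (y / h - 1) = 0.
  by rewrite -mulrDr (_ : _ + _ = 0) ?mulr0 // /h; field; lra.
lra.
Qed.

(* Concavity of s |-> s^q at y (Bernoulli) turns the claim into a quadratic
   inequality in w = x / y, namely q (w - q)^2 + (1 - q)^2 w + q^2 (1 - q) >= 0. *)
Lemma powR_mul_sub_le q x y : 0 < q -> q <= 1 -> 0 <= x -> 0 <= y ->
  x `^ q * ((1 + q) * y - x) <= y `^ q * y.
Proof.
move=> q0 q1 x0 y0.
have hy : 0 <= y `^ q * y by rewrite mulr_ge0 ?powR_ge0.
have [hn|hp] := leP ((1 + q) * y - x) 0.
  by apply: le_trans hy; rewrite mulr_ge0_le0 ?powR_ge0.
have ypos : 0 < y by rewrite lt_neqAle y0 andbT; apply: contraTneq hp => <-; lra.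
set w := x / y; have w0 : 0 <= w by rewrite divr_ge0.
have ex : x = y * w by rewrite /w; field; lra.
have := powR_le_bernoulli q0 q1 w0.
rewrite -(ler_pM2l (powR_gt0 q ypos)) -powRM // -ex => hx.
apply: le_trans (ler_wpM2r (ltW hp) hx) _.
have -> : y `^ q * (1 + q * (w - 1)) * ((1 + q) * y - x)
    = y `^ q * y * ((1 + q * (w - 1)) * (1 + q - w)) by rewrite ex; ring.
rewrite ler_piMr //.
have : 0 <= q * (w - q) ^+ 2 by rewrite mulr_ge0 ?sqr_ge0 ?ltW.
have : 0 <= (1 - q) ^+ 2 * w by rewrite mulr_ge0 ?sqr_ge0.
have : 0 <= q ^+ 2 * (1 - q) by rewrite mulr_ge0 ?sqr_ge0 ?subr_ge0.
lra.
Qed.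

End powR_inequalities.

Lemma pair_sym_ind (R : realDomainType) (F : R -> R -> Prop) :
  (forall x y, F x y -> F y x) -> (forall x y, F x y -> F (- y) (- x)) ->
  (forall x y, 0 <= y -> y <= x -> F x y) -> (forall x y, y < 0 -> 0 < x -> F x y) ->
  forall x y, F x y.
Proof.
move=> Fswap Fopp Fnneg Fsign.
suff Fle x y : y <= x -> F x y.
  by move=> x y; have [/Fle //|/ltW/Fle] := leP y x; apply: Fswap.
move=> yx; have [y0|y0] := leP 0 y; first exact: Fnneg.
have [x0|x0] := ltP 0 x; first exact: Fsign.
by rewrite -(opprK x) -(opprK y); apply/Fopp/Fnneg; rewrite ?oppr_ge0 ?lerN2.
Qed.

Section Vpow_inequalities.
Variable R : realType.
Implicit Types g q x y : R.

Lemma VpowN g x : Vpow g (- x) = - Vpow g x.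
Proof.
by rewrite /Vpow oppr_eq0 normrN; case: ifP => _; rewrite ?oppr0 ?mulrN.
Qed.

Lemma ger0_Vpow g x : 0 < g -> 0 <= x -> Vpow g x = x `^ g.
Proof.
move=> g0; rewrite le_eqVlt => /predU1P[<-|x0]; rewrite /Vpow.
  by rewrite eqxx powR0 // gt_eqF.
by rewrite gt_eqF // gtr0_norm // mulrC mulr_powRB1 // ltW.
Qed.

Lemma ler0_Vpow g x : 0 < g -> x <= 0 -> Vpow g x = - (- x) `^ g.
Proof. by move=> g0 x0; rewrite -{1}(opprK x) VpowN ger0_Vpow // oppr_ge0. Qed.

Lemma normVpow g x : 0 < g -> `|Vpow g x| = `|x| `^ g.
Proof.
move=> g0; have [x0|x0] := leP 0 x.
  by rewrite ger0_Vpow // ger0_norm ?powR_ge0 // ger0_norm.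
by rewrite ler0_Vpow ?ltW // normrN ger0_norm ?powR_ge0 // ltr0_norm.
Qed.

(* Swapping x and y negates [x - y] and [V_g x - V_g y]; replacing (x, y) by
   (-y, -x) changes none of the three quantities. *)
Lemma Vpow_pair_ind g (F : R -> R -> R -> Prop) : 0 < g ->
  (forall n s w, F n s w -> F n (- s) (- w)) ->
  (forall x y, 0 <= y -> y <= x -> F (x + y) (x - y) (x `^ g - y `^ g)) ->
  (forall x y, 0 < x -> 0 < y -> F (x + y) (x + y) (x `^ g + y `^ g)) ->
  forall x y, F (`|x| + `|y|) (x - y) (Vpow g x - Vpow g y).
Proof.
move=> g0 Fodd Fnneg Fsign; apply: pair_sym_ind.
- by move=> x y /Fodd; rewrite !opprB addrC.
- move=> x y; rewrite !normrN addrC !VpowN.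
  have -> : - y - - x = x - y by ring.
  by have -> : - Vpow g y - - Vpow g x = Vpow g x - Vpow g y by ring.
- move=> x y y0 yx; have x0 : 0 <= x := le_trans y0 yx.
  by rewrite !ger0_norm // !ger0_Vpow //; apply: Fnneg.
- move=> x y y0 x0; rewrite gtr0_norm // ltr0_norm // ger0_Vpow ?ltW //.
  by rewrite ler0_Vpow ?ltW // opprK; apply: Fsign; rewrite ?oppr_gt0.
Qed.

Lemma Vpow_mono_le1 q x y : 0 < q -> q <= 1 ->
  q * (`|x| + `|y|) `^ (q - 1) * (x - y) ^+ 2 <= (Vpow q x - Vpow q y) * (x - y).
Proof.
move=> q0 q1; move: x y.
apply: (Vpow_pair_ind (F := fun n s w => q * n `^ (q - 1) * s ^+ 2 <= w * s)) => //.
- by move=> n s w; rewrite sqrrN mulrNN.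
- move=> x y y0 yx; have [x0|x0] := eqVneq x 0.
    by rewrite x0 (_ : y = 0); lra.
  have hxy : (x + y) `^ (q - 1) <= x `^ (q - 1) by apply: ger_powR2r; lra.
  apply: (@le_trans _ _ (q * x `^ (q - 1) * (x - y) * (x - y))).
    rewrite expr2 mulrA; do 2![apply: ler_wpM2r; first lra].
    by apply: ler_wpM2l; lra.
  by apply: ler_wpM2r; [lra | apply: subr_powR_ge].
- move=> x y x0 y0; have xy0 : 0 < x + y by lra.
  have -> : q * (x + y) `^ (q - 1) * (x + y) ^+ 2 = q * (x + y) `^ q * (x + y).
    by rewrite -(mulr_powRB1 (ltW xy0) q0) expr2; ring.
  apply: ler_wpM2r; first lra.
  have := powR_subadd q0 q1 (ltW x0) (ltW y0); have := powR_ge0 (x + y) q.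
  nra.
Qed.

Lemma Vpow_mono_ge1 d x y : 1 <= d ->
  4 * (`|x| + `|y|) `^ (d - 1) * (x - y) ^+ 2
  <= 2 `^ (d + 1) * ((Vpow d x - Vpow d y) * (x - y)).
Proof.
move=> d1; have d0 : 0 < d by lra.
have two_powD r : (2 : R) `^ (r + 2) = 4 * 2 `^ r.
  by rewrite powRD ?implybE ?pnatr_eq0 ?orbT // powR_mulrn //; ring.
move: x y; apply: (Vpow_pair_ind
  (F := fun n s w => 4 * n `^ (d - 1) * s ^+ 2 <= 2 `^ (d + 1) * (w * s))) => //.
- by move=> n s w; rewrite sqrrN mulrNN.
- move=> x y y0 yx; have x0 : 0 <= x := le_trans y0 yx.
  have hxy : (x + y) `^ (d - 1) <= 2 `^ (d - 1) * x `^ (d - 1).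
    by rewrite -powRM //; apply: ler_powR2r; lra.
  have hd : x `^ (d - 1) * (x - y) <= x `^ d - y `^ d.
    rewrite -(mulr_powRB1 x0 d0) -(mulr_powRB1 y0 d0).
    have : y `^ (d - 1) <= x `^ (d - 1) by apply: ler_powR2r; lra.
    have := powR_ge0 y (d - 1); nra.
  have K0 : 0 <= 4 * 2 `^ (d - 1) * (x - y) by rewrite mulr_ge0 ?mulr_ge0 ?powR_ge0 //; lra.
  rewrite (_ : d + 1 = d - 1 + 2); last by ring.
  rewrite two_powD expr2 mulrA.
  apply: (@le_trans _ _ (4 * (2 `^ (d - 1) * x `^ (d - 1)) * (x - y) * (x - y))).
    by do 2![apply: ler_wpM2r; first lra]; apply: ler_wpM2l.
  nra.
- move=> x y x0 y0; have xy0 : 0 < x + y by lra.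
  have e1 : (x + y) `^ d = 2 `^ d * ((x + y) / 2) `^ d.
    by rewrite -powRM ?divr_ge0 //; [congr (_ `^ _); field | lra].
  have e2 : (x + y) `^ (d - 1) * (x + y) ^+ 2 = (x + y) `^ d * (x + y).
    by rewrite -(mulr_powRB1 (ltW xy0) d0) expr2; ring.
  have e3 : (2 : R) `^ (d + 1) = 2 * 2 `^ d.
    by rewrite powRD ?implybE ?pnatr_eq0 ?orbT // powRr1 // mulrC.
  rewrite -mulrA e2 e1 e3.
  have := powR_midpoint_le d1 (ltW x0) (ltW y0).
  have : 0 <= 2 * 2 `^ d * (x + y) by rewrite mulr_ge0 ?mulr_ge0 ?powR_ge0 //; lra.
  nra.
Qed.

Lemma normB_Vpow_le1 q x y : 0 < q -> q <= 1 ->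
  `|Vpow q x - Vpow q y| <= 2 * `|x - y| `^ q.
Proof.
move=> q0 q1; move: x y.
apply: (Vpow_pair_ind (F := fun _ s w => `|w| <= 2 * `|s| `^ q)) => //.
- by move=> _ s w; rewrite !normrN.
- move=> x y y0 yx; have xy0 : 0 <= x - y by lra.
  have := powR_subadd q0 q1 xy0 y0; rewrite subrK => hsub.
  have hyx : y `^ q <= x `^ q by apply: ler_powR2r; lra.
  have := powR_ge0 (x - y) q.
  rewrite !ger0_norm ?subr_ge0 //; lra.
- move=> x y x0 y0.
  have : x `^ q <= (x + y) `^ q by apply: ler_powR2r; lra.
  have : y `^ q <= (x + y) `^ q by apply: ler_powR2r; lra.
  by rewrite !ger0_norm ?addr_ge0 ?powR_ge0 //; [lra | apply: ltW..].
Qed.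

Lemma normD_Vpow_le d x y : 1 <= d -> `|Vpow d x + Vpow d y| <= (`|x| + `|y|) `^ d.
Proof.
move=> d1; have d0 : 0 < d by lra.
have n0 : 0 <= `|x| + `|y| by rewrite addr_ge0.
apply: (le_trans (ler_normD _ _)); rewrite !normVpow //.
have hle (z : R) : `|z| <= `|x| + `|y| -> `|z| `^ d <= `|z| * (`|x| + `|y|) `^ (d - 1).
  move=> hz; rewrite -(mulr_powRB1 (normr_ge0 z) d0).
  by apply: ler_wpM2l => //; apply: ler_powR2r => //; lra.
have := hle x (ler_wpDr (normr_ge0 y) (lexx _)).
have := hle y (ler_wpDl (normr_ge0 x) (lexx _)).
by rewrite -(mulr_powRB1 n0 d0); lra.
Qed.

Lemma normB_Vpow_ge1 d x y : 1 <= d ->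
  4 * (`|x| + `|y|) `^ (d - 1) * `|x - y| <= 2 `^ (d + 1) * `|Vpow d x - Vpow d y|.
Proof.
move=> d1; have [->|xy0] := eqVneq (x - y) 0.
  by rewrite normr0 mulr0 mulr_ge0 ?powR_ge0.
have n0 : 0 < `|x - y| by rewrite normr_gt0.
have := Vpow_mono_ge1 x y d1.
rewrite -real_normK ?num_real // expr2 !mulrA => h.
rewrite -(ler_pM2r n0); apply: le_trans h _.
rewrite -!mulrA -normrM; apply: ler_wpM2l; first exact: powR_ge0.
exact: ler_norm.
Qed.

Lemma mul_subVpow_ge q d x y u v : 0 < q -> q <= 1 -> 1 <= d -> x - y = u - v ->
  q / 2 `^ (d + 1) * (`|x| + `|y|) `^ (q - 1) * (`|u| + `|v|) `^ (d - 1) * (u - v) ^+ 2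
  <= (Vpow q x - Vpow q y) * (Vpow d u - Vpow d v) / 4.
Proof.
move=> q0 q1 d1 exy; have [uv0|uv0] := eqVneq (u - v) 0.
  rewrite (_ : x = y) ?subrr ?uv0 ?expr0n /= ?mulr0 ?mul0r //; lra.
have hP := Vpow_mono_le1 x y q0 q1; rewrite exy in hP.
have hQ := Vpow_mono_ge1 u v d1.
set N := (`|x| + `|y|) `^ (q - 1) in hP *; set M := (`|u| + `|v|) `^ (d - 1) in hQ *.
set C := 2 `^ (d + 1) in hQ *; set s := (u - v) ^+ 2 in hP hQ *.
set P := Vpow q x - Vpow q y in hP *; set Q := Vpow d u - Vpow d v in hQ *.
have C0 : 0 < C := powR_gt0 _ (ltr0Sn _ 1).
have s0 : 0 < s by rewrite /s exprn_even_gt0.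
have N0 : 0 <= N := powR_ge0 _ _; have M0 : 0 <= M := powR_ge0 _ _.
have := ler_pM (mulr_ge0 (mulr_ge0 (ltW q0) N0) (ltW s0))
  (mulr_ge0 (mulr_ge0 (ler0n _ 4) M0) (ltW s0)) hP hQ.
have -> : P * (u - v) * (C * (Q * (u - v))) = C * (P * Q) * s by rewrite /s; ring.
have K0 : 0 < 4 * C * s := mulr_gt0 (mulr_gt0 (ltr0Sn _ 3) C0) s0.
move=> key; rewrite -(ler_pM2r K0).
have -> : q / C * N * M * s * (4 * C * s) = q * N * s * (4 * M * s).
  by field; rewrite gt_eqF.
by have -> : P * Q / 4 * (4 * C * s) = C * (P * Q) * s by field.
Qed.

End Vpow_inequalities.

Lemma young_remainder_le (R : realType) (p d c t M m k : R) : 1 < p -> p <= 2 -> 0 < d ->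
  0 < c -> 0 <= t -> 0 <= M -> 0 <= m -> 0 <= k ->
  2 * t `^ (p - 1) * (M `^ d * p * m `^ (p - 1) * k / 2 - M `^ (d - 1) * t * m `^ p / c)
  <= (c / (p - 1)) `^ (p - 1) * M `^ (p + d - 1) * k `^ p.
Proof.
move=> p1 p2 d0 c0 t0 M0 m0 k0.
have q0 : 0 < p - 1 by lra.
have q1 : p - 1 <= 1 by lra.
set q := p - 1 in q0 q1 *.
set X := 2 * t * m / c; set Y := M * k.
have X0 : 0 <= X by rewrite /X divr_ge0 ?mulr_ge0 // ltW.
have Y0 : 0 <= Y by rewrite /Y mulr_ge0.
have etm : t `^ q * m `^ q = (c / 2) `^ q * X `^ q.
  have c2 : 0 <= c / 2 by rewrite divr_ge0 // ltW.
  rewrite -!powRM //; congr (_ `^ _).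
  by rewrite /X; field; rewrite gt_eqF.
have eL : 2 * t `^ q * (M `^ d * p * m `^ q * k / 2 - M `^ (d - 1) * t * m `^ p / c)
    = (c / 2) `^ q * M `^ (d - 1) * (X `^ q * ((1 + q) * Y - X)).
  rewrite -(mulr_powRB1 M0 d0) -(mulr_powRB1 m0 (lt_trans ltr01 p1)) -/q.
  rewrite (_ : (c / 2) `^ q * M `^ (d - 1) * (X `^ q * ((1 + q) * Y - X))
    = t `^ q * m `^ q * M `^ (d - 1) * ((1 + q) * Y - X)); first last.
    by rewrite etm; ring.
  by rewrite /X /Y /q; field; rewrite gt_eqF.
have eR : M `^ (p + d - 1) * k `^ p = M `^ (d - 1) * (Y `^ q * Y).
  rewrite (_ : p + d - 1 = p + (d - 1)); last by ring.
  rewrite powRD; last by rewrite implybE gt_eqF ?orbT //; lra.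
  rewrite [Y `^ q * Y]mulrC /q (mulr_powRB1 Y0 (lt_trans ltr01 p1)) /Y powRM //.
  ring.
have hc : (c / 2) `^ q <= (c / q) `^ q.
  apply: ler_powR2r; rewrite ?divr_ge0 ?(ltW c0) ?(ltW q0) //.
  by rewrite ler_pdivlMr // mulrAC ler_pdivrMr ?ler_pM2l //; lra.
rewrite eL -[_ * _ * k `^ p]mulrA eR.
apply: le_trans (ler_wpM2l _ (powR_mul_sub_le q0 q1 X0 Y0)) _.
  by rewrite mulr_ge0 ?powR_ge0.
by rewrite -mulrA ler_wpM2r ?mulr_ge0 ?powR_ge0.
Qed.

Lemma mul_Vpow_remainder_ge (R : realType) (p d x y u v e f : R) : 1 < p -> p <= 2 -> 1 <= d ->
  x - y = u - v -> 0 <= e -> 0 <= f ->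
  - (2 `^ (d + 1) / (p - 1)) `^ (p - 1) * (`|u| + `|v|) `^ (p + d - 1) * `|e - f| `^ p
  <= `|Vpow (p - 1) x - Vpow (p - 1) y| * `|Vpow d u - Vpow d v| * (e `^ p + f `^ p) / 4
     + (Vpow (p - 1) x - Vpow (p - 1) y) * (Vpow d u + Vpow d v) * (e `^ p - f `^ p) / 2.
Proof.
move=> p1 p2 d1 exy e0 f0.
have q0 : 0 < p - 1 by lra.
have q1 : p - 1 <= 1 by lra.
have hP := normB_Vpow_le1 x y q0 q1; rewrite exy in hP.
have hQ1 := normB_Vpow_ge1 u v d1.
have hQ2 := normD_Vpow_le u v d1.
have hef := normB_powR_le (ltW p1) e0 f0.
have hm := powR_max_le p e f.
set P := Vpow (p - 1) x - Vpow (p - 1) y in hP *.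
set Q1 := Vpow d u - Vpow d v in hQ1 *; set Q2 := Vpow d u + Vpow d v in hQ2 *.
set C := 2 `^ (d + 1) in hQ1 *; set M := `|u| + `|v| in hQ1 hQ2 *.
set t := `|u - v| in hP hQ1; set m := Num.max e f in hef hm.
have C0 : 0 < C := powR_gt0 _ (ltr0Sn _ 1).
have m0 : 0 <= m by rewrite /m le_max e0.
have P0 : 0 <= `|P| := normr_ge0 P.
have t0 : 0 <= t := normr_ge0 _; have M0 : 0 <= M := addr_ge0 (normr_ge0 u) (normr_ge0 v).
have hB : `|P| * (M `^ d * p * m `^ (p - 1) * `|e - f| / 2 - M `^ (d - 1) * t * m `^ p / C)
    <= (C / (p - 1)) `^ (p - 1) * M `^ (p + d - 1) * `|e - f| `^ p.
  have E0 : 0 <= (C / (p - 1)) `^ (p - 1) * M `^ (p + d - 1) * `|e - f| `^ p.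
    by rewrite !mulr_ge0 ?powR_ge0.
  have [B0|/ltW B0] := leP (M `^ d * p * m `^ (p - 1) * `|e - f| / 2
    - M `^ (d - 1) * t * m `^ p / C) 0; first exact: le_trans (mulr_ge0_le0 P0 B0) E0.
  apply: le_trans (ler_wpM2r B0 hP) _.
  by apply: young_remainder_le => //; lra.
have T1 : `|P| * M `^ (d - 1) * t * m `^ p / C <= `|P| * `|Q1| * (e `^ p + f `^ p) / 4.
  have K0 : 0 <= `|P| / (4 * C) := divr_ge0 P0 (mulr_ge0 (ler0n _ 4) (ltW C0)).
  have := ler_wpM2l K0 (ler_pM _ (powR_ge0 _ _) hQ1 hm).
  have -> : `|P| * M `^ (d - 1) * t * m `^ p / C
    = `|P| / (4 * C) * (4 * M `^ (d - 1) * t * m `^ p) by field; rewrite gt_eqF.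
  have -> : `|P| * `|Q1| * (e `^ p + f `^ p) / 4
    = `|P| / (4 * C) * (C * `|Q1| * (e `^ p + f `^ p)) by field; rewrite gt_eqF.
  by apply; rewrite !mulr_ge0 ?powR_ge0.
have T2 : - (`|P| * (M `^ d * (p * m `^ (p - 1) * `|e - f|))) / 2
    <= P * Q2 * (e `^ p - f `^ p) / 2.
  have := ler_wpM2l P0 (ler_pM (normr_ge0 _) (normr_ge0 _) hQ2 hef).
  have := lerNnormlW (lexx `|P * Q2 * (e `^ p - f `^ p)|).
  rewrite !normrM -mulrA; lra.
lra.
Qed.

Theorem lemma2p2 (R : realType) (p delta : R) (hp1 : 1 < p) (hp2 : p <= 2)
  (hdelta : 1 <= delta) (a b c d e f : R) (he : 0 <= e) (hf : 0 <= f) :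
  (Vpow (p - 1) (a - b) - Vpow (p - 1) (c - d)) *
    (Vpow delta (a - c) * e `^ p - Vpow delta (b - d) * f `^ p)
  >= (p - 1) / 2 `^ (delta + 1)
       * (`|a - b| + `|c - d|) `^ (p - 2)
       * (`|a - c| + `|b - d|) `^ (delta - 1)
       * `|(a - c) - (b - d)| ^+ 2
       * (e `^ p + f `^ p)
     - (2 `^ (delta + 1) / (p - 1)) `^ (p - 1)
       * (`|a - c| + `|b - d|) `^ (p + delta - 1)
       * `|e - f| `^ p.
Proof.
have : (a - b) - (c - d) = (a - c) - (b - d) by ring.
move: (a - b) (c - d) (a - c) (b - d) => x y u v exy.
have q0 : 0 < p - 1 by lra.
have q1 : p - 1 <= 1 by lra.
have hPQ := mul_subVpow_ge q0 q1 hdelta exy.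
have hR := mul_Vpow_remainder_ge hp1 hp2 hdelta exy he hf.
have PQ0 : 0 <= (Vpow (p - 1) x - Vpow (p - 1) y) * (Vpow delta u - Vpow delta v).
  have : 0 <= (p - 1) / 2 `^ (delta + 1) * (`|x| + `|y|) `^ (p - 1 - 1)
              * (`|u| + `|v|) `^ (delta - 1).
    by rewrite !mulr_ge0 ?divr_ge0 ?powR_ge0 // ltW.
  move/mulr_ge0/(_ (sqr_ge0 (u - v))); lra.
rewrite -normrM ger0_norm // in hR.
have := ler_wpM2r (addr_ge0 (powR_ge0 e p) (powR_ge0 f p)) hPQ.
rewrite real_normK ?num_real // (_ : p - 2 = p - 1 - 1); last by ring.
lra.
Qed.
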